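(* For fixed $N\ge1$, $\omega_1,\dots,\omega_N\in\mathbb{R}$ and $\kappa\ne0$, the system \[ \dot\theta_i=\omega_i-\frac{\kappa}{N}\sum_{j=1}^N(1+\cos\theta_j)\sin\theta_i,\qquad i=1,\dots,N, \] has at most $2^{N+1}$ equilibria that are distinct modulo $2\pi$.
   Context: An equilibrium is $\Theta\in\mathbb{R}^N$ at which all right-hand sides vanish; two equilibria are distinct modulo $2\pi$ if they differ as points of $(\mathbb{R}/2\pi\mathbb{Z})^N$. *)

From Stdlib Require Import Reals Lra Lia List ZArith.
Open Scope R_scope.

Fixpoint sumN (N : nat) (f : nat -> R) : R :=
  match N with
  | O => 0
  | S n => sumN n f + f n
  end.

(* Right-hand side of equation i (indices shifted to 0..N-1). *)
Definition rhs (N : nat) (omega : nat -> R) (kappa : R) (theta : nat -> R) (i : nat) : R :=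
  omega i - kappa / INR N * sumN N (fun j => (1 + cos (theta j)) * sin (theta i)).

Definition is_equilibrium (N : nat) (omega : nat -> R) (kappa : R) (theta : nat -> R) : Prop :=
  forall i, (i < N)%nat -> rhs N omega kappa theta i = 0.

Definition eq_mod_2pi (N : nat) (theta theta' : nat -> R) : Prop :=
  forall i, (i < N)%nat -> exists k : Z, theta i - theta' i = 2 * PI * IZR k.

(* At an equilibrium theta put S = sum_j (1 + cos theta_j) and y_j = S cos theta_j.  The
   equations say S sin theta_j = N omega_j / kappa =: c_j, so (S, y) solves the system
     S^2 = N S + sum_j y_j,        y_j^2 = S^2 - c_j^2,
   and equilibria that differ modulo 2pi give different solutions (if S = 0, every
   theta_j is pi modulo 2pi).  View F^M as the functions on M distinct solutions, so that
   multiplication by a coordinate is a diagonal matrix.  By the two relations, the span of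
   the 2^(N+1) monomials S^b prod_(j in E) y_j (b in {0,1}) is stable under multiplication
   by S and by every y_j; it contains the constants and the coordinates separate the
   points, so by Lagrange interpolation it is all of F^M, whence M <= 2^(N+1). *)

From Stdlib Require Import Reals List Lra Lia ssreflect.

Set Implicit Arguments.
Unset Strict Implicit.

Lemma eq_mod_2pi_of_sin_cos x y :
  sin x = sin y -> cos x = cos y -> exists k : Z, x - y = 2 * PI * IZR k.
Proof.
move=> Hsin Hcos.
have Hdiff : cos (x - y) = 1.
  rewrite cos_minus -Hsin -Hcos; have := sin2_cos2 x; rewrite /Rsqr; lra.
have Hhalf : sin ((x - y) / 2) = 0.
  have := cos_2a_sin ((x - y) / 2).
  have -> : 2 * ((x - y) / 2) = x - y by field.
  rewrite Hdiff => Hsq.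
  have : sin ((x - y) / 2) * sin ((x - y) / 2) = 0 by lra.
  by case/Rmult_integral.
have [k Hk] := sin_eq_0_0 _ Hhalf.
by exists k; lra.
Qed.

Lemma sumN_mulr N f c : sumN N (fun j => f j * c) = sumN N f * c.
Proof. by elim: N => [|N IH] /=; [ring | rewrite IH; ring]. Qed.

Lemma sumN_mull N f c : sumN N (fun j => c * f j) = c * sumN N f.
Proof. by elim: N => [|N IH] /=; [ring | rewrite IH; ring]. Qed.

Lemma sumN_nonneg N f : (forall j, (j < N)%nat -> 0 <= f j) -> 0 <= sumN N f.
Proof.
elim: N => [|N IH] Hf /=; first lra.
have := Hf N (Nat.lt_succ_diag_r N).
have := IH (fun j Hj => Hf j (Nat.lt_lt_succ_r _ _ Hj)); lra.
Qed.

Lemma sumN_eq0_nonneg N f :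
  (forall j, (j < N)%nat -> 0 <= f j) -> sumN N f = 0 ->
  forall j, (j < N)%nat -> f j = 0.
Proof.
elim: N => [|N IH] Hf /= Hsum j Hj; first lia.
have HfN := Hf N (Nat.lt_succ_diag_r N).
have Hf' j' (Hj' : (j' < N)%nat) := Hf j' (Nat.lt_lt_succ_r _ _ Hj').
have := sumN_nonneg Hf'.
case: (Nat.eq_dec j N) => [-> | HjN] Hpos; first lra.
by apply: IH => //; [lra | lia].
Qed.

Definition influence N (theta : nat -> R) : R := sumN N (fun j => 1 + cos (theta j)).

Lemma influence_sqr N theta :
  influence N theta * influence N theta =
  INR N * influence N theta + sumN N (fun j => influence N theta * cos (theta j)).
Proof.
rewrite sumN_mull.
suff -> : influence N theta = INR N + sumN N (fun j => cos (theta j)) by ring.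
rewrite /influence; elim: N => [|N IH]; first by rewrite /=; ring.
by rewrite S_INR /= IH; ring.
Qed.

Lemma influence_eq0_cos N theta :
  influence N theta = 0 -> forall j, (j < N)%nat -> cos (theta j) = -1.
Proof.
move=> H0 j Hj.
suff : 1 + cos (theta j) = 0 by lra.
apply: (sumN_eq0_nonneg (f := fun i => 1 + cos (theta i))) H0 j Hj => i _.
by have := COS_bound (theta i); lra.
Qed.

Lemma sin_eq0_of_cos_eqN1 x : cos x = -1 -> sin x = 0.
Proof.
move=> Hc; have := sin2_cos2 x; rewrite /Rsqr Hc => H.
have : sin x * sin x = 0 by lra.
by case/Rmult_integral.
Qed.

Section Equilibria.

Variables (N : nat) (omega : nat -> R) (kappa : R).
Hypotheses (HN : (1 <= N)%nat) (Hkappa : kappa <> 0).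

Lemma equilibrium_sin theta j :
  is_equilibrium N omega kappa theta -> (j < N)%nat ->
  influence N theta * sin (theta j) = omega j * INR N / kappa.
Proof.
move=> Heq Hj; have := Heq j Hj; rewrite /rhs sumN_mulr -/(influence N theta) => H.
have HN0 : INR N <> 0 by apply: not_0_INR; lia.
have -> : omega j = kappa / INR N * (influence N theta * sin (theta j)) by lra.
by field.
Qed.

Lemma equilibrium_cos_sqr theta j :
  is_equilibrium N omega kappa theta -> (j < N)%nat ->
  influence N theta * cos (theta j) * (influence N theta * cos (theta j)) =
  influence N theta * influence N theta -
  omega j * INR N / kappa * (omega j * INR N / kappa).
Proof.
move=> Heq Hj; rewrite -(equilibrium_sin Heq Hj).
have := sin2_cos2 (theta j); rewrite /Rsqr; nra.
Qed.

Lemma equilibria_eq_mod_2pi theta theta' :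
  is_equilibrium N omega kappa theta -> is_equilibrium N omega kappa theta' ->
  influence N theta = influence N theta' ->
  (forall j, (j < N)%nat ->
     influence N theta * cos (theta j) = influence N theta' * cos (theta' j)) ->
  eq_mod_2pi N theta theta'.
Proof.
move=> Heq Heq' HS Hcos j Hj.
case: (Req_dec (influence N theta) 0) => HS0.
- have Hc := influence_eq0_cos HS0 Hj.
  have Hc' : cos (theta' j) = -1 by apply: influence_eq0_cos Hj; rewrite -HS.
  by apply: eq_mod_2pi_of_sin_cos; [rewrite !sin_eq0_of_cos_eqN1 | rewrite Hc Hc'].
- apply: eq_mod_2pi_of_sin_cos; apply: (Rmult_eq_reg_l (influence N theta)) => //.
  + by rewrite equilibrium_sin // HS equilibrium_sin.
  + by rewrite {2}HS Hcos.
Qed.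

End Equilibria.

From mathcomp Require Import all_boot all_algebra ring Rstruct.
Import GRing.Theory.
Local Open Scope ring_scope.

Section SeparatingDiagonals.

Variables (F : fieldType) (m M : nat) (V : 'M[F]_(m, M)).

Lemma row_full_of_separating_diag :
  ((const_mx 1 : 'rV_M) <= V)%MS ->
  (forall i k : 'I_M, i != k ->
     exists2 x : 'rV_M, x 0 i != x 0 k & stablemx V (diag_mx x)) ->
  row_full V.
Proof.
move=> V1 sepV.
have interp (i : 'I_M) (s : seq 'I_M) : i \notin s ->
    exists2 u : 'rV_M, (u <= V)%MS & u 0 i = 1 /\ {in s, forall k, u 0 k = 0}.
  elim: s => [_ | k s IH]; first by exists (const_mx 1); rewrite ?mxE.
  rewrite in_cons negb_or => /andP[ik /IH[u uV [ui us]]].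
  have [x xik xV] := sepV i k ik.
  pose c := (x 0 i - x 0 k)^-1.
  (* Multiplying by (x - x_k) / (x_i - x_k) keeps coordinate i and kills coordinate k. *)
  exists (c *: (u *m (diag_mx x - (x 0 k)%:M))).
    rewrite scalemx_sub // (submx_trans (submxMr _ uV)) //.
    by apply: stablemxD; rewrite ?stablemxN ?stablemxC.
  have uE j : (c *: (u *m (diag_mx x - (x 0 k)%:M))) 0 j =
              c * (u 0 j * x 0 j - x 0 k * u 0 j).
    by rewrite mulmxBr mul_mx_diag mul_mx_scalar !mxE.
  split; first by rewrite uE ui mul1r mulr1 mulVf // subr_eq0.
  move=> j; rewrite in_cons => /predU1P[-> | js].
    by rewrite uE [u 0 k * _]mulrC subrr mulr0.
  by rewrite uE us // mul0r mulr0 subrr mulr0.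
rewrite -sub1mx; apply/row_subP => i.
have [|u uV [ui us]] := interp i [seq k <- enum 'I_M | k != i].
  by rewrite mem_filter eqxx.
suff -> : row i 1%:M = u by [].
apply/rowP => k; rewrite !mxE; have [<- | ik] := eqVneq i k; first by rewrite ui.
by rewrite us // mem_filter eq_sym ik mem_enum.
Qed.

End SeparatingDiagonals.

Section MonomialSpan.

Variables (F : fieldType) (N M : nat) (S : 'I_M -> F) (y : 'I_M -> 'I_N -> F).

Definition monomial (be : bool * {set 'I_N}) : 'rV[F]_M :=
  \row_k (S k ^+ be.1 * \prod_(j in be.2) y k j).

Definition monomial_span : 'M[F]_(#|{: bool * {set 'I_N}}|, M) :=
  \matrix_i monomial (enum_val i).

Lemma monomial_sub be : (monomial be <= monomial_span)%MS.
Proof. by have := row_sub (enum_rank be) monomial_span; rewrite rowK enum_rankK. Qed.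

Lemma rank_monomial_span : (\rank monomial_span <= 2 ^ N.+1)%N.
Proof.
rewrite (leq_trans (rank_leq_row _)) // card_prod card_bool expnS.
by rewrite -cardsT -powersetT card_powerset cardsT card_ord.
Qed.

Lemma stablemx_monomial_span f :
  (forall be, (monomial be *m f <= monomial_span)%MS) -> stablemx monomial_span f.
Proof. by move=> Hf; apply/row_subP => i; rewrite row_mul rowK. Qed.

Let dS := diag_mx (\row_k S k).
Let dy j := diag_mx (\row_k y k j).

Lemma monomial0_mulS (E : {set 'I_N}) : monomial (false, E) *m dS = monomial (true, E).
Proof. by apply/rowP => k; rewrite mul_mx_diag !mxE /= mul1r mulrC. Qed.

Lemma monomial_muly_notin b (E : {set 'I_N}) j :
  j \notin E -> monomial (b, E) *m dy j = monomial (b, j |: E).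
Proof.
move=> jE; apply/rowP => k; rewrite mul_mx_diag !mxE /= (big_setU1 _ jE) /=.
by rewrite -mulrA [X in _ * X]mulrC.
Qed.

Variables (A : F) (a : 'I_N -> F).
Hypothesis sqrS : forall k, S k ^+ 2 = A * S k + \sum_j y k j.
Hypothesis sqry : forall k j, y k j ^+ 2 = S k ^+ 2 - a j.

Lemma monomial_muly_in b (E : {set 'I_N}) j : j \in E ->
  monomial (b, E) *m dy j = monomial (b, E :\ j) *m (dS *m dS - (a j)%:M).
Proof.
move=> jE; apply/rowP => k.
rewrite mulmxBr mulmxA !mul_mx_diag mul_mx_scalar !mxE /= (big_setD1 j jE) /=.
set P := \prod_(i in E :\ j) y k i.
transitivity (S k ^+ b * P * y k j ^+ 2); first by ring.
by rewrite sqry; ring.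
Qed.

Lemma monomial1_mulS (E : {set 'I_N}) :
  monomial (true, E) *m dS = A *: monomial (true, E) + \sum_j monomial (false, E) *m dy j.
Proof.
apply/rowP => k; rewrite mul_mx_diag !mxE summxE /=.
set P := \prod_(j in E) y k j.
transitivity (S k ^+ 2 * P); first by ring.
rewrite sqrS mulrDl mulr_suml; congr (_ + _); first by ring.
by apply: eq_bigr => j _; rewrite mul_mx_diag !mxE /= expr0 mul1r mulrC.
Qed.

Lemma stablemx_span_S : stablemx monomial_span dS.
Proof.
apply: stablemx_monomial_span => -[[] E]; last by rewrite monomial0_mulS monomial_sub.
elim: {E}_.+1 {-2}E (ltnSn #|E|) => // n IH E ltEn.
rewrite monomial1_mulS addmx_sub ?scalemx_sub ?monomial_sub //.
apply: summx_sub => j _; have [jE | jE] := boolP (j \in E); last first.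
  by rewrite monomial_muly_notin ?monomial_sub.
rewrite monomial_muly_in // mulmxBr mulmxA monomial0_mulS mul_mx_scalar.
rewrite addmx_sub ?IH -?scaleNr ?scalemx_sub ?monomial_sub //.
by move: ltEn; rewrite (cardsD1 j E) jE.
Qed.

Lemma stablemx_span_y j : stablemx monomial_span (dy j).
Proof.
apply: stablemx_monomial_span => -[b E]; have [jE | jE] := boolP (j \in E).
  rewrite monomial_muly_in // (submx_trans (submxMr _ (monomial_sub _))) //.
  apply: stablemxD; last by rewrite stablemxN stablemxC.
  by apply: stablemxM; apply: stablemx_span_S.
by rewrite monomial_muly_notin ?monomial_sub.
Qed.

Lemma card_solutions_le :
  (forall k k', S k = S k' -> (forall j, y k j = y k' j) -> k = k') ->
  (M <= 2 ^ N.+1)%N.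
Proof.
move=> injSy.
suff /eqP <- : row_full monomial_span by exact: rank_monomial_span.
apply: row_full_of_separating_diag.
  have -> : const_mx 1 = monomial (false, set0).
    by apply/rowP => k; rewrite !mxE big_set0 mulr1.
  exact: monomial_sub.
move=> i k ik; have [/existsP[j yik] | /existsPn yik] := boolP [exists j, y i j != y k j].
  by exists (\row_k y k j); rewrite ?mxE ?stablemx_span_y.
exists (\row_k S k); last exact: stablemx_span_S.
rewrite !mxE; apply: contra ik => /eqP Sik; apply/eqP/injSy => // j.
by apply/eqP; rewrite -[_ == _]negbK yik.
Qed.

End MonomialSpan.

Lemma sumN_big N (f : nat -> R) : sumN N f = \sum_(j < N) f j.
Proof. by elim: N => [|N IH] /=; rewrite ?big_ord0 // big_ord_recr /= IH. Qed.

Lemma Nat_powE m n : Nat.pow m n = (m ^ n)%N.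
Proof. by elim: n => // n IH; rewrite expnS -IH. Qed.

Open Scope R_scope.

Theorem theorem2p22 (N : nat) (omega : nat -> R) (kappa : R) :
  Peano.le 1 N -> kappa <> 0 ->
  forall l : list (nat -> R),
    (forall theta, In theta l -> is_equilibrium N omega kappa theta) ->
    (forall a b, Peano.lt a (length l) -> Peano.lt b (length l) -> a <> b ->
       ~ eq_mod_2pi N (List.nth a l (fun _ => 0)) (List.nth b l (fun _ => 0))) ->
    Peano.le (length l) (Nat.pow 2 (Nat.add N 1)).
Proof.
move=> HN Hkappa l Heq Hdist.
pose theta (k : 'I_(length l)) := List.nth k l (fun _ => 0).
have Htheta k : is_equilibrium N omega kappa (theta k).
  by apply/Heq/nth_In/ltP.
pose c j := omega j * INR N / kappa.
rewrite Nat_powE plusE addn1; apply/leP.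
apply: (card_solutions_le (S := fun k => influence N (theta k))
  (y := fun k j => influence N (theta k) * cos (theta k j))
  (A := INR N) (a := fun j => c j * c j)).
- move=> k; rewrite expr2 -(sumN_big _ (fun j => influence N (theta k) * cos (theta k j))).
  exact: influence_sqr.
- move=> k j; rewrite !expr2; apply: (equilibrium_cos_sqr HN Hkappa (Htheta k)).
  exact/ltP.
- move=> k k' HS Hy; apply: val_inj; case: (Nat.eq_dec k k') => // kk'; exfalso.
  apply: (Hdist k k' _ _ kk'); [exact/ltP | exact/ltP |].
  apply: (equilibria_eq_mod_2pi HN Hkappa (Htheta k) (Htheta k') HS) => j /ltP Hj.
  exact: (Hy (Ordinal Hj)).
Qed.
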